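(* Let $f:\mathbb{R}\to(0,\infty)$ be $C^4$, unimodal with maximum at $\mu$, of the form $f=e^{-H}$ with $H$ regularly varying (there is $\alpha>0$ with $H(tx)/H(t)\to x^\alpha$ as $|t|\to\infty$ for all $x>0$), and with $|(\log f)''''|<M$ for some $M>0$. Then for every $\beta>0$ and $\ell>0$, $$\ell^2\left[\tfrac12V(\beta)-I(\beta)+\tfrac{1}{4\beta}R(\beta)\right]=-\ell^2\,\mathrm{Var}_\beta\!\left(h(X)-\tfrac12k(X)\right).$$
   Context: $h=\log f$, $k(x)=(x-\mu)h'(x)$, $r(x)=(x-\mu)^2h''(x)$; $\mathbb{E}_\beta,\mathrm{Var}_\beta,\mathrm{Cov}_\beta$ are moments under $f^\beta/\int f^\beta$. $I(\beta)=\mathrm{Var}_\beta(h(X))$, $V(\beta)=\mathrm{Cov}_\beta(h(X),k(X))$, $R(\beta)=\mathbb{E}_\beta[r(X)-k(X)]$. *)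

From HB Require Import structures.
From mathcomp Require Import all_boot all_order all_algebra.
From mathcomp Require Import all_classical all_reals all_analysis.
Set Implicit Arguments. Unset Strict Implicit. Unset Printing Implicit Defensive.
Import Order.TTheory GRing.Theory Num.Theory.
Import numFieldNormedType.Exports.
Local Open Scope classical_set_scope.
Local Open Scope ring_scope.

Section Defs.
Variable R : realType.

Definition Cn (n : nat) (g : R -> R) : Prop :=
  (forall m : nat, (m < n)%N -> forall x : R, derivable (derive1n m g) x 1) /\
  continuous (derive1n n g).

Definition unimodal_at (g : R -> R) (mu : R) : Prop :=
  (forall x y, x <= y -> y <= mu -> g x <= g y) /\
  (forall x y, mu <= x -> x <= y -> g y <= g x).

Definition regularly_varying (H : R -> R) (alpha : R) : Prop :=
  forall x : R, 0 < x ->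
    ((fun t => H (t * x) / H t) @ +oo --> x `^ alpha) /\
    ((fun t => H (t * x) / H t) @ -oo --> x `^ alpha).

Definition Zb (f : R -> R) (beta : R) : R :=
  Rintegral lebesgue_measure setT (fun x => f x `^ beta).

Definition Eb (f : R -> R) (beta : R) (g : R -> R) : R :=
  Rintegral lebesgue_measure setT (fun x => g x * f x `^ beta) / Zb f beta.

Definition Covb (f : R -> R) (beta : R) (g1 g2 : R -> R) : R :=
  Eb f beta (fun x => (g1 x - Eb f beta g1) * (g2 x - Eb f beta g2)).

Definition Varb (f : R -> R) (beta : R) (g : R -> R) : R := Covb f beta g g.

Definition hfun (f : R -> R) : R -> R := fun x => ln (f x).
Definition kfun (f : R -> R) (mu : R) : R -> R :=
  fun x => (x - mu) * derive1 (hfun f) x.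
Definition rfun (f : R -> R) (mu : R) : R -> R :=
  fun x => (x - mu) ^+ 2 * derive1n 2 (hfun f) x.

Definition Ifun (f : R -> R) (beta : R) : R := Varb f beta (hfun f).
Definition Vfun (f : R -> R) (mu beta : R) : R := Covb f beta (hfun f) (kfun f mu).
Definition Rfun (f : R -> R) (mu beta : R) : R :=
  Eb f beta (fun x => rfun f mu x - kfun f mu x).

End Defs.

(* Write w = f^beta = exp (beta h). For phi of polynomial growth, (phi w)' = (phi' + beta phi h') w,
   and phi w decays like 1 / (1 + x^2): regular variation of H = - h with positive index gives
   H (2 t) >= rho H (t) for some rho > 1 and large |t|, which makes w decay faster than any
   polynomial. Hence the w-integral of phi' + beta phi h' vanishes. The choices
   phi = x - mu, (x - mu) h and (x - mu)^2 h' give three linear relations between the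
   w-integrals of 1, h, k, h k, k^2 and r, and expanding V, I, R and the variance of h - k/2
   reduces the identity to them. Polynomial growth of h, h' and h'' comes from the bound on the
   fourth derivative of h. *)

From HB Require Import structures.
From mathcomp Require Import all_boot all_order all_algebra.
From mathcomp Require Import all_classical all_reals all_analysis.
From mathcomp Require Import ring lra measurable_realfun.
Import Order.TTheory GRing.Theory Num.Theory.
Import numFieldNormedType.Exports.
Local Open Scope ring_scope.
Set Implicit Arguments. Unset Strict Implicit. Unset Printing Implicit Defensive.

Section DerivableUpto.
Variable R : realType.
Implicit Types g : R -> R.

Definition derivable_upto (n : nat) g :=
  forall m, (m < n)%N -> forall x, derivable (derive1n m g) x 1.

Lemma derivable_uptoS n g :
  derivable_upto n.+1 g <-> (forall x, derivable g x 1) /\ derivable_upto n (derive1 g).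
Proof.
split=> [dg | [dg0 dg] [|m] mn x //].
  by split=> [|m mn]; [exact: (dg 0%N) | rewrite -derive1Sn; exact: dg].
by rewrite derive1Sn; exact: dg.
Qed.

Lemma derivable_uptoW n g : derivable_upto n.+1 g -> derivable_upto n g.
Proof. by move=> dg m mn; apply: dg; exact: ltnW. Qed.

Lemma derive1_is_derive g g' : (forall x, is_derive x (1 : R) g (g' x)) -> derive1 g = g'.
Proof. by move=> dg; apply/funext => x; rewrite derive1E derive_val. Qed.

Lemma derivable_is_derive g : (forall x, derivable g x 1) ->
  forall x, is_derive x (1 : R) g (derive1 g x).
Proof. by move=> dg x; rewrite derive1E; exact: derivableP. Qed.

Lemma derivable_continuous g : (forall x, derivable g x 1) -> continuous g.
Proof. by move=> dg x; apply/differentiable_continuous/derivable1_diffP. Qed.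

Lemma derivable_uptoD n g1 g2 : derivable_upto n g1 -> derivable_upto n g2 ->
  derivable_upto n (fun x => g1 x + g2 x).
Proof.
elim: n g1 g2 => [g1 g2 _ _ m //|n IH g1 g2 /derivable_uptoS[d1 s1] /derivable_uptoS[d2 s2]].
apply/derivable_uptoS; split=> [x|]; first exact: derivableD.
have -> : derive1 (fun x => g1 x + g2 x) = fun x => derive1 g1 x + derive1 g2 x.
  by apply: derive1_is_derive => x; apply: is_deriveD; exact: derivable_is_derive.
exact: IH.
Qed.

Lemma derivable_uptoN n g : derivable_upto n g -> derivable_upto n (fun x => - g x).
Proof.
elim: n g => [g _ m //|n IH g /derivable_uptoS[d s]].
apply/derivable_uptoS; split=> [x|]; first exact: derivableN.
have -> : derive1 (fun x => - g x) = fun x => - derive1 g x.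
  by apply: derive1_is_derive => x; apply: is_deriveN; exact: derivable_is_derive.
exact: IH.
Qed.

Lemma derivable_uptoM n g1 g2 : derivable_upto n g1 -> derivable_upto n g2 ->
  derivable_upto n (fun x => g1 x * g2 x).
Proof.
elim: n g1 g2 => [g1 g2 _ _ m //|n IH g1 g2 D1 D2].
have /derivable_uptoS[d1 s1] := D1; have /derivable_uptoS[d2 s2] := D2.
apply/derivable_uptoS; split=> [x|]; first exact: derivableM.
have -> : derive1 (fun x => g1 x * g2 x) =
    fun x => derive1 g1 x * g2 x + g1 x * derive1 g2 x.
  apply: derive1_is_derive => x; apply: is_derive_eq.
    by apply: is_deriveM; exact: derivable_is_derive.
  by rewrite !derive1E /GRing.scale /=; ring.
by apply: derivable_uptoD; [apply: IH s1 _ | apply: IH _ s2]; exact: derivable_uptoW.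
Qed.

Lemma derivable_uptoV n g : (forall x, g x != 0) -> derivable_upto n g ->
  derivable_upto n (fun x => (g x)^-1).
Proof.
move=> g0; elim: n g g0 => [g _ _ m //|n IH g g0 D].
have /derivable_uptoS[d s] := D; have Dinv := IH _ g0 (derivable_uptoW D).
apply/derivable_uptoS; split=> [x|]; first exact: derivableV.
have -> : derive1 (fun x => (g x)^-1) = fun x => - derive1 g x * ((g x)^-1 * (g x)^-1).
  apply: derive1_is_derive => x; apply: is_derive_eq.
    by apply: is_deriveV => //; exact: derivable_is_derive.
  by rewrite derive1E /GRing.scale /= expr2 invfM; ring.
exact: derivable_uptoM (derivable_uptoN s) (derivable_uptoM Dinv Dinv).
Qed.

Lemma derivable_upto_ln n g : (forall x, 0 < g x) -> derivable_upto n g ->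
  derivable_upto n (fun x => ln (g x)).
Proof.
case: n => [_ _ m //|n] g0 D; have /derivable_uptoS[d s] := D.
have Dln x : is_derive x (1 : R) (fun x => ln (g x)) (derive1 g x * (g x)^-1).
  rewrite mulrC; apply: is_derive1_comp; first exact: is_derive1_ln.
  exact: derivable_is_derive.
apply/derivable_uptoS; split=> [x|]; first by have [] := Dln x.
rewrite (derive1_is_derive Dln); apply: derivable_uptoM s _.
by apply: derivable_uptoV => [x|]; [rewrite gt_eqF | exact: derivable_uptoW].
Qed.

End DerivableUpto.

Section PolynomialGrowth.
Variable R : realType.
Implicit Types (g : R -> R) (x : R).

Definition bracket x := 1 + x ^+ 2.

Lemma bracket_ge1 x : 1 <= bracket x.
Proof. by rewrite /bracket lerDl sqr_ge0. Qed.

Lemma bracket_gt0 x : 0 < bracket x.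
Proof. exact: lt_le_trans (bracket_ge1 x). Qed.

Lemma bracketX_ge1 x n : 1 <= bracket x ^+ n.
Proof. exact/exprn_ege1/bracket_ge1. Qed.

Lemma bracketX_ge0 x n : 0 <= bracket x ^+ n.
Proof. exact: le_trans (bracketX_ge1 x n). Qed.

Lemma bracketX_homo x m n : (m <= n)%N -> bracket x ^+ m <= bracket x ^+ n.
Proof. exact/ler_weXn2l/bracket_ge1. Qed.

Lemma bracketN x : bracket (- x) = bracket x.
Proof. by rewrite /bracket sqrrN. Qed.

Lemma le_bracketX x y n : `|x| <= `|y| -> bracket x ^+ n <= bracket y ^+ n.
Proof.
move=> xy; apply: lerXn2r; rewrite ?nnegrE ?(ltW (bracket_gt0 _)) //.
rewrite /bracket lerD2l -[x ^+ 2]real_normK ?num_real //.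
by rewrite -[y ^+ 2]real_normK ?num_real // lerXn2r.
Qed.

Lemma normr_le_bracket x : `|x| <= bracket x.
Proof. by rewrite /bracket -[x ^+ 2]real_normK ?num_real //; nra. Qed.

Definition poly_bounded g := exists C n, forall x, `|g x| <= C * bracket x ^+ n.

Lemma poly_boundedP g : poly_bounded g ->
  exists C n, 0 <= C /\ forall x, `|g x| <= C * bracket x ^+ n.
Proof.
move=> [C [n gC]]; exists `|C|, n; split=> // x; apply: le_trans (gC x) _.
by rewrite ler_wpM2r ?bracketX_ge0 ?ler_norm.
Qed.

Lemma poly_bounded_cst c : poly_bounded (fun _ => c).
Proof. by exists `|c|, 0%N => x; rewrite expr0 mulr1. Qed.

Lemma poly_bounded_subr c : poly_bounded (fun x => x - c).
Proof.
exists (1 + `|c|), 1%N => x; rewrite expr1; apply: le_trans (ler_normB _ _) _.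
have := normr_le_bracket x; have := bracket_ge1 x; have := normr_ge0 c; nra.
Qed.

Lemma poly_boundedD g1 g2 : poly_bounded g1 -> poly_bounded g2 ->
  poly_bounded (fun x => g1 x + g2 x).
Proof.
move=> /poly_boundedP[C1 [n1 [C1ge0 g1C]]] /poly_boundedP[C2 [n2 [C2ge0 g2C]]].
exists (C1 + C2), (n1 + n2)%N => x; apply: le_trans (ler_normD _ _) _.
have b1 : C1 * bracket x ^+ n1 <= C1 * bracket x ^+ (n1 + n2).
  by rewrite ler_wpM2l // bracketX_homo // leq_addr.
have b2 : C2 * bracket x ^+ n2 <= C2 * bracket x ^+ (n1 + n2).
  by rewrite ler_wpM2l // bracketX_homo // leq_addl.
have := g1C x; have := g2C x; lra.
Qed.

Lemma poly_boundedM g1 g2 : poly_bounded g1 -> poly_bounded g2 ->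
  poly_bounded (fun x => g1 x * g2 x).
Proof.
move=> /poly_boundedP[C1 [n1 [C1ge0 g1C]]] /poly_boundedP[C2 [n2 [C2ge0 g2C]]].
exists (C1 * C2), (n1 + n2)%N => x; rewrite normrM exprD mulrACA.
by apply: ler_pM.
Qed.

Lemma MVT_from0 g g' x : (forall y, is_derive y (1 : R) g (g' y)) ->
  exists2 c, `|c| <= `|x| & g x - g 0 = g' c * x.
Proof.
move=> dg; have cg : continuous g by apply: derivable_continuous => y; have [] := dg y.
have [x0|x0] := lerP 0 x.
  have [c] := MVT_segment x0 (fun y _ => dg y) (continuous_subspaceT cg).
  rewrite in_itv /= subr0 => /andP[c0 cx] ->; exists c => //.
  by rewrite !ger0_norm // (le_trans c0).
have [c] := MVT_segment (ltW x0) (fun y _ => dg y) (continuous_subspaceT cg).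
rewrite in_itv /= sub0r => /andP[xc c0] e; exists c; last by rewrite -opprB e mulrN opprK.
by rewrite !ler0_norm ?lerN2 // ltW.
Qed.

Lemma poly_bounded_primitive g g' : (forall x, is_derive x (1 : R) g (g' x)) ->
  poly_bounded g' -> poly_bounded g.
Proof.
move=> dg /poly_boundedP[C [n [C0 g'C]]]; exists (`|g 0| + C), n.+1 => x.
have [c cx gx] := MVT_from0 x dg.
have -> : g x = g 0 + g' c * x by rewrite -gx; ring.
apply: le_trans (ler_normD _ _) _; rewrite normrM exprSr.
have g'c : `|g' c| <= C * bracket x ^+ n.
  by apply: le_trans (g'C c) _; rewrite ler_wpM2l // le_bracketX.
have := ler_pM (normr_ge0 _) (normr_ge0 _) g'c (normr_le_bracket x).
have := mulr_ege1 (bracketX_ge1 x n) (bracket_ge1 x); have := normr_ge0 (g 0).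
nra.
Qed.

End PolynomialGrowth.

Section Tempered.
Variable R : realType.
Implicit Types g : R -> R.

Definition tempered g := continuous g /\ poly_bounded g.

Lemma tempered_cst c : tempered (fun _ : R => c).
Proof. by split; [exact: cst_continuous | exact: poly_bounded_cst]. Qed.

Lemma tempered_subr c : tempered (fun x : R => x - c).
Proof.
split; last exact: poly_bounded_subr.
by move=> x; apply: continuousB; [exact: cvg_id | exact: cst_continuous].
Qed.

Lemma temperedD g1 g2 : tempered g1 -> tempered g2 -> tempered (fun x => g1 x + g2 x).
Proof.
move=> [c1 b1] [c2 b2]; split; last exact: poly_boundedD.
by move=> x; apply: continuousD; [exact: c1 | exact: c2].
Qed.

Lemma temperedM g1 g2 : tempered g1 -> tempered g2 -> tempered (fun x => g1 x * g2 x).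
Proof.
move=> [c1 b1] [c2 b2]; split; last exact: poly_boundedM.
by move=> x; apply: continuousM; [exact: c1 | exact: c2].
Qed.

Lemma temperedB g1 g2 : tempered g1 -> tempered g2 -> tempered (fun x => g1 x - g2 x).
Proof.
move=> t1 t2; have -> : (fun x => g1 x - g2 x) = fun x => g1 x + -1 * g2 x.
  by apply/funext => x; rewrite mulN1r.
exact/temperedD/temperedM/t2/tempered_cst.
Qed.

Lemma temperedZ c g : tempered g -> tempered (fun x => c * g x).
Proof. exact/temperedM/tempered_cst. Qed.

End Tempered.

Section DoublingGrowth.
Variable R : realType.

Lemma bernoulli_ineq (rho : R) (k : nat) : 1 <= rho -> 1 + k%:R * (rho - 1) <= rho ^+ k.
Proof.
move=> rho1; elim: k => [|k IH]; first by rewrite mul0r addr0 expr0.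
rewrite exprS -natr1.
have : (rho - 1) * (1 + k%:R * (rho - 1)) <= (rho - 1) * rho ^+ k.
  by rewrite ler_wpM2l // subr_ge0.
have : 0 <= k%:R * (rho - 1) ^+ 2 :> R by rewrite mulr_ge0 // sqr_ge0.
nra.
Qed.

Lemma halving_bound (phi : R -> R) (T K : R) : 0 < T ->
  (forall t, 2 * T <= t -> phi t <= phi (t / 2)) ->
  (forall t, T <= t -> t <= 2 * T -> phi t <= K) ->
  forall t, T <= t -> phi t <= K.
Proof.
move=> T0 halve base.
have dyadic m t : T <= t -> t <= T * 2 ^+ m -> phi t <= K.
  elim: m t => [|m IH] t Tt; first by rewrite expr0 mulr1 => tT; apply: base; lra.
  move=> tm; have [t2T|t2T] := lerP t (2 * T); first exact: base.
  apply: le_trans (halve _ (ltW t2T)) _; apply: IH.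
    by rewrite ler_pdivlMr //; lra.
  by rewrite ler_pdivrMr // -mulrA -exprSr.
move=> t Tt; apply: (dyadic (Num.bound (t / T))) => //.
have /ltW := upper_nthrootP (leqnn (Num.bound (t / T))).
by rewrite ler_pdivrMr // mulrC.
Qed.

Variables (G : R -> R) (a rho : R).
Hypotheses (rho_gt1 : 1 < rho)
  (G_nondecr : forall x y, a <= x -> x <= y -> G x <= G y)
  (G_ratio : exists T, forall t, T < t -> rho < G (t * 2) / G t).

Lemma doubling_eventually : exists T, 1 <= T /\ a <= T /\
  forall t, T <= t -> 0 < G t /\ rho * G t <= G (t * 2).
Proof.
have [T1 ratio] := G_ratio.
have [T [T1T [aT T1le]]] : exists T, T1 < T /\ a <= T /\ 1 <= T.
  exists (Num.max (Num.max T1 a) 1 + 1).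
  by split; [|split]; rewrite ?ltr_pwDr ?ler_wpDr // !le_max ?lexx ?orbT.
exists T; split=> //; split=> // t Tt.
have rt := ratio t (lt_le_trans T1T Tt).
have Gt0 : 0 < G t.
  rewrite ltNge; apply/negP; rewrite le_eqVlt => /orP[/eqP Gt0 | Gtlt0].
    by move: rt; rewrite Gt0 invr0 mulr0 ltNge (le_trans ler01 (ltW rho_gt1)).
  have q1 : G (t * 2) / G t <= 1.
    by rewrite ler_ndivrMr // mul1r; apply: G_nondecr; lra.
  by move: rt; rewrite ltNge (le_trans q1 (ltW rho_gt1)).
by split=> //; apply: ltW; rewrite -ltr_pdivlMr.
Qed.

Lemma doubling_unbounded L : exists T, 1 <= T /\
  forall t, T <= t -> L <= G t /\ rho * G t <= G (t * 2).
Proof.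
have [T0 [T01 [aT0 doubling]]] := doubling_eventually.
have GT0 := (doubling T0 (lexx _)).1.
have T0le k : T0 <= T0 * 2 ^+ k by rewrite ler_peMr ?exprn_ege1 //; lra.
have iter k : rho ^+ k * G T0 <= G (T0 * 2 ^+ k).
  elim: k => [|k IH]; first by rewrite !expr0 mul1r mulr1.
  have -> : T0 * 2 ^+ k.+1 = T0 * 2 ^+ k * 2 by rewrite exprSr mulrA.
  apply: le_trans (doubling _ (T0le k)).2.
  by rewrite exprS -mulrA ler_wpM2l // ltW // (lt_trans ltr01 rho_gt1).
pose k := Num.bound (`|L| / (G T0 * (rho - 1))).
have Gr0 : 0 < G T0 * (rho - 1) by rewrite mulr_gt0 // subr_gt0.
have Lk : `|L| < k%:R * (G T0 * (rho - 1)).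
  by rewrite -ltr_pdivrMr // archi_boundP // divr_ge0 // ltW.
have kbig : L <= rho ^+ k * G T0.
  have := ler_wpM2r (ltW GT0) (bernoulli_ineq k (ltW rho_gt1)).
  have := ler_norm L; lra.
exists (T0 * 2 ^+ k); split=> [|t Tt]; first exact: le_trans (T0le k).
split; last exact: (doubling t (le_trans (T0le k) Tt)).2.
apply: le_trans kbig (le_trans (iter k) _); apply: G_nondecr Tt.
exact: le_trans (T0le k).
Qed.

Lemma doubling_tail_bound (n : nat) (beta G0 : R) : 0 < beta -> (forall x, G0 <= G x) ->
  exists K T, forall x, T <= x -> bracket x ^+ n * expR (- (beta * G x)) <= K.
Proof.
move=> beta0 G0le; have rho1 : 0 < rho - 1 by rewrite subr_gt0.
(* Beyond T, G >= L, so halving t gains a factor exp (- beta (rho - 1) L) = exp (- 4 ^ n)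
   in the exponential, which pays for the factor 4 ^ n lost in bracket t ^+ n. *)
pose L := 4 ^+ n / (beta * (rho - 1)).
have betaL : beta * (rho - 1) * L = 4 ^+ n by rewrite mulrC divfK // gt_eqF ?mulr_gt0.
have [T [T1 GT]] := doubling_unbounded L.
exists (bracket (2 * T) ^+ n * expR (- (beta * G0))), T.
apply: halving_bound => [|t tT|t tT t2T]; first lra.
  pose s := t / 2; have ts : t = s * 2 by rewrite divfK.
  have sT : T <= s by rewrite ler_pdivlMr //; lra.
  have [Ls rs] := GT s sT.
  have bt : bracket t ^+ n <= 4 ^+ n * bracket s ^+ n.
    rewrite -exprMn lerXn2r ?nnegrE ?mulr_ge0 ?ltW ?bracket_gt0 //.
    by rewrite /bracket ts; nra.
  have et : expR (- (beta * G t)) <= expR (- (beta * (rho - 1) * L)) * expR (- (beta * G s)).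
    rewrite -expRD ler_expR ts.
    have : beta * (rho * G s) <= beta * G (s * 2) by rewrite ler_wpM2l // ltW.
    have : beta * (rho - 1) * L <= beta * (rho - 1) * G s.
      by rewrite ler_wpM2l // mulr_ge0 // ltW.
    nra.
  have small : 4 ^+ n * expR (- (beta * (rho - 1) * L)) <= 1.
    rewrite betaL expRN ler_pdivrMr ?expR_gt0 // mul1r.
    by apply: le_trans (expR_ge1Dx _); rewrite lerDr.
  apply: le_trans (ler_pM (bracketX_ge0 _ _) (expR_ge0 _) bt et) _.
  rewrite mulrACA; apply: ler_piMl => //.
  by rewrite mulr_ge0 ?bracketX_ge0 ?expR_ge0.
apply: ler_pM; rewrite ?bracketX_ge0 ?expR_ge0 //.
  by apply: le_bracketX; rewrite !ger0_norm //; lra.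
by rewrite ler_expR lerN2 ler_wpM2l // ltW.
Qed.

End DoublingGrowth.

Section IntegralOfDerivative.
Local Open Scope classical_set_scope.
Variable R : realType.
Local Notation mu := (@lebesgue_measure R).

Lemma continuous_bracketV : continuous (fun x : R => (bracket x)^-1).
Proof.
move=> x; apply: continuousV; first by rewrite gt_eqF ?bracket_gt0.
rewrite /bracket; apply: continuousD; first exact: cst_continuous.
by rewrite /GRing.exp /=; apply: continuousM; exact: cvg_id.
Qed.

Lemma integrable_bracketV : mu.-integrable setT (EFin \o fun x => (bracket x)^-1).
Proof.
have b0 (x : R) : 0 <= (bracket x)^-1 by rewrite invr_ge0 ltW ?bracket_gt0.
apply/integrableP; split.
  by apply/measurable_EFinP; exact: continuous_measurable_fun continuous_bracketV.
under eq_integral => x _ do rewrite /= (ger0_norm (b0 x)).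
rewrite ge0_symfun_integralT //; last 2 first.
- exact: continuous_bracketV.
- by move=> x; rewrite /= bracketN.
rewrite -set_itvcy (@ge0_continuous_FTC2y R _ atan 0 (pi / 2)) //.
- by rewrite -EFinB -EFinM ltry.
- exact/continuous_subspaceT/continuous_bracketV.
- exact: cvgy_atan.
- exact/cvg_at_right_filter/continuous_atan.
- by move=> x _; rewrite derive1_atan.
Qed.

Lemma integral_sym_itv_cvg (g : R -> R) : continuous g -> mu.-integrable setT (EFin \o g) ->
  (fun n : nat => \int[mu]_(x in `[(- n.+1%:R)%R, n.+1%:R%R]) (g x)%:E)%E @ \oo -->
  (\int[mu]_x (g x)%:E)%E.
Proof.
move=> cg ig; pose gn (n : nat) := (EFin \o g) \_ `[- n.+1%:R, n.+1%:R].
have mg : measurable_fun setT (EFin \o g).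
  by apply/measurable_EFinP; exact: continuous_measurable_fun.
have mgn n : measurable_fun setT (gn n).
  by apply/(measurable_restrictT _ _).1 => //; exact: measurable_funTS.
have gn_cvg : {ae mu, forall x, setT x -> gn ^~ x @ \oo --> (EFin \o g) x}.
  apply: aeW => x _; apply: cvg_near_cst; exists (Num.bound `|x|) => // n /= xn.
  rewrite /gn patchE mem_set //= in_itv /= -ler_norml.
  apply/ltW/(lt_le_trans (archi_boundP (normr_ge0 x))).
  by rewrite ler_nat; exact: leq_trans xn _.
have gn_le : {ae mu, forall x n, setT x -> (`|gn n x| <= (EFin \o (Num.norm \o g)) x)%E}.
  apply: aeW => x n _; rewrite /gn patchE; case: ifP => _ //.
  by rewrite abse0 lee_fin normr_ge0.
have [_ _ +] := @dominated_convergence _ _ _ mu setT measurableT gn (EFin \o g)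
  (EFin \o (Num.norm \o g)) mgn mg gn_cvg (integrable_norm ig) gn_le.
apply: cvg_trans; apply: near_eq_cvg; apply: nearW => n.
by rewrite /gn integral_mkcond.
Qed.

Lemma cvg_sym_increment (G : R -> R) (K : R) : (forall x, `|G x| <= K / bracket x) ->
  (fun n : nat => G n.+1%:R - G (- n.+1%:R)) @ \oo --> 0.
Proof.
move=> GK; have G_le n x : `|x| = n.+1%:R -> `|G x| <= `|K| * harmonic n.
  move=> xN; apply: le_trans (GK x) _; apply: le_trans (ler_norm _) _.
  have -> : bracket x = bracket n.+1%:R by rewrite /bracket -xN real_normK ?num_real.
  rewrite normrM ler_wpM2l // ger0_norm ?invr_ge0 ?(ltW (bracket_gt0 _)) //=.
  rewrite lef_pV2 ?posrE ?bracket_gt0 ?ltr0Sn //.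
  exact: le_trans (ler_norm _) (normr_le_bracket _).
apply: (@squeeze_cvgr _ _ _ _ (fun n => - (2 * `|K| * harmonic n))
  (fun n => 2 * `|K| * harmonic n)).
- apply: nearW => n; rewrite -ler_norml; apply: le_trans (ler_normB _ _) _.
  rewrite -mulrA mulr_natl mulr2n.
  by apply: lerD; apply: G_le; rewrite ?normrN normr_nat.
- rewrite -oppr0; apply: cvgN; rewrite -(mulr0 (2 * `|K|)).
  by apply: cvgMr; exact: cvg_harmonic.
- by rewrite -(mulr0 (2 * `|K|)); apply: cvgMr; exact: cvg_harmonic.
Qed.

Lemma Rintegral_derive_eq0 (G g : R -> R) (K : R) :
  (forall x, is_derive x (1 : R) G (g x)) -> continuous g ->
  mu.-integrable setT (EFin \o g) ->
  (forall x, `|G x| <= K / bracket x) ->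
  \int[mu]_x g x = 0.
Proof.
move=> dG cg ig GK.
have cG : continuous G by apply: derivable_continuous => x; have [] := dG x.
pose v (n : nat) := G n.+1%:R - G (- n.+1%:R).
have FTC n : (\int[mu]_(x in `[(- n.+1%:R)%R, n.+1%:R%R]) (g x)%:E = (v n)%:E)%E.
  apply: continuous_FTC2; first by rewrite gtrN.
  - exact: continuous_subspaceT.
  - split; first by move=> x _; have [] := dG x.
    + exact/cvg_at_right_filter/cG.
    + exact/cvg_at_left_filter/cG.
  - by move=> x _; rewrite derive1E; have [_ ->] := dG x.
have v_int : (EFin \o v) @ \oo --> (\int[mu]_x (g x)%:E)%E.
  apply: cvg_trans (integral_sym_itv_cvg cg ig); apply: near_eq_cvg; apply: nearW => n.
  by rewrite /= FTC.
have v_0 : (EFin \o v) @ \oo --> 0%:E.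
  by apply: cvg_EFin; [exact: nearW | exact: cvg_sym_increment GK].
by rewrite /Rintegral -(cvg_unique _ v_0 v_int).
Qed.

End IntegralOfDerivative.

Section RegularlyVaryingDecay.
Variables (R : realType) (H : R -> R) (mu alpha : R).
Hypotheses (alpha_gt0 : 0 < alpha) (H_rv : regularly_varying H alpha)
  (H_min : forall x, H mu <= H x)
  (H_nondecr : forall x y, mu <= x -> x <= y -> H x <= H y)
  (H_nonincr : forall x y, x <= y -> y <= mu -> H y <= H x).

Lemma regularly_varying_doubling : exists2 rho, 1 < rho &
  (exists T, forall t, T < t -> rho < H (t * 2) / H t) /\
  (exists T, forall t, T < t -> rho < H (- (t * 2)) / H (- t)).
Proof.
have two_alpha : 1 < 2 `^ alpha.
  by rewrite /powR pnatr_eq0 expR_gt1 mulr_gt0 // ln_gt0 // ltr1n.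
pose rho := (1 + 2 `^ alpha) / 2.
have rho_lt : rho < 2 `^ alpha by rewrite /rho; lra.
exists rho; first by rewrite /rho; lra.
have [Hy HNy] := H_rv (ltr0Sn R 1).
split.
  by have [T [_ HT]] := cvgr_gt _ Hy _ rho_lt; exists T => t tT; apply: HT.
move: HNy; rewrite cvgNy_compNP => HNy.
have [T [_ HT]] := cvgr_gt _ HNy _ rho_lt.
by exists T => t tT; rewrite -mulNr; apply: HT.
Qed.

Lemma regularly_varying_expR_decay n beta : 0 < beta ->
  exists K, forall x, bracket x ^+ n * expR (- (beta * H x)) <= K.
Proof.
move=> beta_gt0; have [rho rho_gt1 [ratio_right ratio_left]] := regularly_varying_doubling.
have [K1 [T1 right]] := doubling_tail_bound rho_gt1 H_nondecr ratio_right n beta_gt0 H_min.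
have H_nondecrN x y : - mu <= x -> x <= y -> H (- x) <= H (- y).
  by move=> mx xy; apply: H_nonincr; rewrite ?lerN2 // lerNl.
have [K2 [T2 left]] := doubling_tail_bound (G := fun t => H (- t)) rho_gt1 H_nondecrN
  ratio_left n beta_gt0 (fun x => H_min (- x)).
pose T := Num.max T1 T2.
exists (Num.max K1 (Num.max K2 (bracket T ^+ n * expR (- (beta * H mu))))) => x.
have [xT1|xT1] := lerP T1 x; first by rewrite !le_max right.
have [xT2|xT2] := lerP x (- T2).
  have := left (- x); rewrite bracketN opprK => lx.
  by rewrite !le_max lx ?orbT // lerNr.
rewrite !le_max; apply/orP; right; apply/orP; right.
apply: ler_pM; rewrite ?bracketX_ge0 ?expR_ge0 //.
  apply: le_bracketX.
  have T1T : T1 <= T by rewrite le_max lexx.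
  have T2T : T2 <= T by rewrite le_max lexx orbT.
  by apply: le_trans (ler_norm T); rewrite ler_norml; apply/andP; split; lra.
by rewrite ler_expR lerN2 ler_wpM2l // ltW.
Qed.

End RegularlyVaryingDecay.

Lemma variance_identity_field (F : numFieldType) (Z a b c d e g beta : F) : beta != 0 ->
  Z + beta * b = 0 -> b + a + beta * c = 0 -> 2 * b + g + beta * e = 0 ->
  (c / Z - a / Z * (b / Z)) / 2 - (d / Z - a / Z * (a / Z)) + (g - b) / Z / (4 * beta)
  = - ((d - c + e / 4) / Z - (a - b / 2) / Z * ((a - b / 2) / Z)).
Proof.
move=> beta0 eqA eqB eqC.
(* For Z = 0 both sides vanish, since x / 0 = 0. *)
have [->|Z0] := eqVneq Z 0; first by rewrite invr0; ring.
have ZE : Z = - (beta * b) by apply/eqP; rewrite -subr_eq0 opprK eqA.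
have aE : a = - b - beta * c by apply/eqP; rewrite -subr_eq0 -eqB; apply/eqP; ring.
have gE : g = - 2 * b - beta * e by apply/eqP; rewrite -subr_eq0 -eqC; apply/eqP; ring.
rewrite ZE in Z0 *; rewrite aE gE; field.
by move: Z0; rewrite oppr_eq0 mulf_eq0 negb_or andbC.
Qed.

Section WeightedIntegrals.
Local Open Scope classical_set_scope.
Variables (R : realType) (f : R -> R) (beta : R).
Local Notation leb := (@lebesgue_measure R).
Local Notation h := (hfun f).
Local Notation h' := (derive1 (hfun f)).
Hypotheses (f_gt0 : forall x, 0 < f x) (h_derivable : forall x, derivable h x 1)
  (weight_decay : forall n, exists K, forall x, bracket x ^+ n * f x `^ beta <= K).

Definition wint (g : R -> R) : R := \int[leb]_x (g x * f x `^ beta).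

Lemma powR_hfun x : f x `^ beta = expR (beta * h x).
Proof. by rewrite /powR gt_eqF. Qed.

Lemma is_derive_weight x :
  is_derive x (1 : R) (fun x => f x `^ beta) (beta * h' x * f x `^ beta).
Proof.
rewrite (funext powR_hfun) powR_hfun mulrC; apply: is_derive1_comp.
exact: is_deriveZ (derivable_is_derive h_derivable x).
Qed.

Lemma tempered_weight : tempered (fun x => f x `^ beta).
Proof.
split; first by apply: derivable_continuous => x; have [] := is_derive_weight x.
have [K WK] := weight_decay 0; exists K, 0%N => x.
by rewrite ger0_norm ?powR_ge0 //; move: (WK x); rewrite !expr0 mul1r mulr1.
Qed.

Lemma tempered_weight_decay g : tempered g ->
  exists K, forall x, `|g x * f x `^ beta| <= K / bracket x.
Proof.
move=> [_ /poly_boundedP[C [n [C0 gC]]]]; have [K WK] := weight_decay n.+1.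
exists (C * K) => x; have w0 : 0 <= f x `^ beta by exact: powR_ge0.
rewrite normrM (ger0_norm w0) -mulrA.
apply: le_trans (ler_wpM2r w0 (gC x)) _; rewrite -mulrA ler_wpM2l //.
by rewrite ler_pdivlMr ?bracket_gt0 // mulrAC -exprSr.
Qed.

Lemma integrable_weighted g : tempered g ->
  leb.-integrable setT (EFin \o fun x => g x * f x `^ beta).
Proof.
move=> tg; have [K gK] := tempered_weight_decay tg.
apply: (@le_integrable _ _ _ leb setT measurableT _ (EFin \o fun x => K * (bracket x)^-1)).
- apply/measurable_EFinP; apply: continuous_measurable_fun => x.
  exact: (temperedM tg tempered_weight).1.
- by move=> x _; rewrite /= lee_fin (le_trans (gK x)) ?ler_norm.
- exact: (integrableZl measurableT K (@integrable_bracketV R)).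
Qed.

Lemma wintD g1 g2 : tempered g1 -> tempered g2 ->
  wint (fun x => g1 x + g2 x) = wint g1 + wint g2.
Proof.
move=> t1 t2; rewrite /wint -RintegralD ?integrable_weighted //.
by apply: eq_Rintegral => x _; rewrite mulrDl.
Qed.

Lemma wintB g1 g2 : tempered g1 -> tempered g2 ->
  wint (fun x => g1 x - g2 x) = wint g1 - wint g2.
Proof.
move=> t1 t2; rewrite /wint -RintegralB ?integrable_weighted //.
by apply: eq_Rintegral => x _; rewrite mulrBl.
Qed.

Lemma wintZ c g : tempered g -> wint (fun x => c * g x) = c * wint g.
Proof.
move=> tg; rewrite /wint -RintegralZl ?integrable_weighted //.
by apply: eq_Rintegral => x _; rewrite mulrA.
Qed.

Lemma wint_ibp phi phi' : (forall x, is_derive x (1 : R) phi (phi' x)) ->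
  tempered phi -> tempered phi' -> tempered h' ->
  wint phi' + beta * wint (fun x => phi x * h' x) = 0.
Proof.
move=> dphi tphi tphi' th'.
have tphih' := temperedM tphi th'.
have [K phiK] := tempered_weight_decay tphi.
rewrite -wintZ // -wintD //; last exact: temperedZ.
apply: (Rintegral_derive_eq0 (G := fun x => phi x * f x `^ beta)) phiK.
- move=> x; apply: is_derive_eq; first exact: is_deriveM (dphi x) (is_derive_weight x).
  by rewrite /GRing.scale /=; ring.
- by apply: (temperedM (temperedD tphi' (temperedZ beta tphih')) tempered_weight).1.
- by apply: integrable_weighted; apply: temperedD tphi' (temperedZ beta tphih').
Qed.

Lemma Zb_wint : Zb f beta = wint (fun _ => 1).
Proof. by apply: eq_Rintegral => x _; rewrite mul1r. Qed.

Lemma Covb_wint g1 g2 : tempered g1 -> tempered g2 ->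
  Covb f beta g1 g2 = wint (fun x => g1 x * g2 x) / Zb f beta
    - wint g1 / Zb f beta * (wint g2 / Zb f beta).
Proof.
move=> t1 t2; rewrite /Covb /Eb -!/(wint _) Zb_wint.
set Z := wint (fun=> 1); set a := wint g1 / Z; set b := wint g2 / Z.
have -> : (fun x => (g1 x - a) * (g2 x - b)) =
    fun x => g1 x * g2 x + - b * g1 x + - a * g2 x + a * b * 1.
  by apply/funext => x; ring.
have t12 := temperedM t1 t2; have tb := temperedZ (- b) t1.
have ta := temperedZ (- a) t2; have tab := temperedZ (a * b) (tempered_cst 1).
rewrite (wintD (temperedD (temperedD t12 tb) ta) tab) (wintD (temperedD t12 tb) ta).
rewrite (wintD t12 tb) (wintZ _ t1) (wintZ _ t2) (wintZ _ (tempered_cst 1)) -/Z /a /b.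
have [->|Z0] := eqVneq Z 0; first by rewrite invr0; ring.
by field.
Qed.

Section MomentIdentities.
Variable mu : R.
Local Notation h'' := (derive1n 2 (hfun f)).
Local Notation k := (kfun f mu).
Local Notation r := (rfun f mu).
Hypotheses (h'_derivable : forall x, derivable h' x 1)
  (h''_derivable : forall x, derivable h'' x 1) (h''_poly_bounded : poly_bounded h'').

Let is_derive_h x : is_derive x (1 : R) h (h' x) := derivable_is_derive h_derivable x.
Let is_derive_h' x : is_derive x (1 : R) h' (h'' x) := derivable_is_derive h'_derivable x.

Lemma tempered_h' : tempered h'.
Proof.
split; first exact: derivable_continuous h'_derivable.
exact: poly_bounded_primitive is_derive_h' h''_poly_bounded.
Qed.

Lemma tempered_h : tempered h.
Proof.
split; first exact: derivable_continuous h_derivable.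
exact: poly_bounded_primitive is_derive_h tempered_h'.2.
Qed.

Lemma tempered_k : tempered k.
Proof. exact: temperedM (tempered_subr mu) tempered_h'. Qed.

Lemma tempered_r : tempered r.
Proof.
have -> : r = fun x => (x - mu) * (x - mu) * h'' x by apply/funext => x; rewrite /rfun expr2.
apply: temperedM; first exact: temperedM (tempered_subr mu) (tempered_subr mu).
by split; [exact: derivable_continuous h''_derivable | exact: h''_poly_bounded].
Qed.

Let is_derive_subr x : is_derive x (1 : R) (fun y => y - mu) 1.
Proof. by have := is_deriveB (is_derive_id x (1 : R)) (is_derive_cst mu x 1); rewrite subr0. Qed.

Lemma wint_k : wint (fun=> 1) + beta * wint k = 0.
Proof. exact: wint_ibp is_derive_subr (tempered_subr mu) (tempered_cst 1) tempered_h'. Qed.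

Lemma wint_hk : wint k + wint h + beta * wint (fun x => h x * k x) = 0.
Proof.
have dphi x : is_derive x (1 : R) (fun x => (x - mu) * h x) (k x + h x).
  apply: (is_derive_eq (is_deriveM (is_derive_subr x) (is_derive_h x))).
  by rewrite /kfun /GRing.scale /=; ring.
have := wint_ibp dphi (temperedM (tempered_subr mu) tempered_h)
  (temperedD tempered_k tempered_h) tempered_h'.
rewrite (wintD tempered_k tempered_h).
have -> // : (fun x => (x - mu) * h x * h' x) = fun x => h x * k x.
by apply/funext => x; rewrite /kfun; ring.
Qed.

Lemma wint_kk : 2 * wint k + wint r + beta * wint (fun x => k x * k x) = 0.
Proof.
have dphi x : is_derive x (1 : R) (fun x => (x - mu) * (x - mu) * h' x) (2 * k x + r x).
  apply: (is_derive_eq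
    (is_deriveM (is_deriveM (is_derive_subr x) (is_derive_subr x)) (is_derive_h' x))).
  by rewrite /kfun /rfun /GRing.scale /= mulrfctE; ring.
have := wint_ibp dphi (temperedM (temperedM (tempered_subr mu) (tempered_subr mu)) tempered_h')
  (temperedD (temperedZ 2 tempered_k) tempered_r) tempered_h'.
rewrite (wintD (temperedZ 2 tempered_k) tempered_r) (wintZ 2 tempered_k).
have -> // : (fun x => (x - mu) * (x - mu) * h' x * h' x) = fun x => k x * k x.
by apply/funext => x; rewrite /kfun; ring.
Qed.

Lemma variance_identity : beta != 0 ->
  Vfun f mu beta / 2 - Ifun f beta + Rfun f mu beta / (4 * beta)
  = - Varb f beta (fun x => h x - k x / 2).
Proof.
move=> beta0.
have tk2 : tempered (fun x => k x / 2) by exact/temperedM/tempered_cst/tempered_k.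
have wk2 : wint (fun x => k x / 2) = wint k / 2.
  by rewrite mulrC -(wintZ _ tempered_k); congr wint; apply/funext => x; rewrite mulrC.
have wqq : wint (fun x => (h x - k x / 2) * (h x - k x / 2)) =
    wint (fun x => h x * h x) - wint (fun x => h x * k x) + wint (fun x => k x * k x) / 4.
  have thh := temperedM tempered_h tempered_h; have thk := temperedM tempered_h tempered_k.
  have tkk := temperedM tempered_k tempered_k.
  rewrite mulrC -(wintZ _ tkk) -(wintB thh thk) -(wintD (temperedB thh thk) (temperedZ _ tkk)).
  by congr wint; apply/funext => x; field.
have tq := temperedB tempered_h tk2.
rewrite /Vfun /Ifun /Rfun /Varb (Covb_wint tempered_h tempered_k).
rewrite (Covb_wint tempered_h tempered_h) (Covb_wint tq tq).
rewrite /Eb -/(wint _) (wintB tempered_r tempered_k) wqq (wintB tempered_h tk2) wk2 Zb_wint.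
exact: variance_identity_field beta0 wint_k wint_hk wint_kk.
Qed.

End MomentIdentities.

End WeightedIntegrals.

Lemma unimodal_powR_decay (R : realType) (f H : R -> R) (mu alpha beta : R) :
  (forall x, 0 < f x) -> unimodal_at f mu -> (forall x, f x = expR (- H x)) ->
  0 < alpha -> regularly_varying H alpha -> 0 < beta ->
  forall n, exists K, forall x, bracket x ^+ n * f x `^ beta <= K.
Proof.
move=> f_gt0 [f_incr f_decr] fE alpha_gt0 H_rv beta_gt0 n.
have H_le x y : f y <= f x -> H x <= H y by rewrite !fE ler_expR lerN2.
have H_min x : H mu <= H x.
  by apply: H_le; have [xmu|mux] := lerP x mu; [exact: f_incr | exact: f_decr (ltW mux)].
have H_nondecr x y : mu <= x -> x <= y -> H x <= H y by move=> mx xy; exact/H_le/f_decr.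
have H_nonincr x y : x <= y -> y <= mu -> H y <= H x by move=> xy ymu; exact/H_le/f_incr.
have [K HK] := regularly_varying_expR_decay alpha_gt0 H_rv H_min H_nondecr H_nonincr n beta_gt0.
by exists K => x; rewrite /powR gt_eqF // fE expRK mulrN.
Qed.

Theorem proposition4 (R : realType) (f H : R -> R) (mu alpha M : R) :
  (forall x, 0 < f x) ->
  Cn 4 f ->
  unimodal_at f mu ->
  (forall x, f x = expR (- H x)) ->
  0 < alpha -> regularly_varying H alpha ->
  0 < M -> (forall x, `|derive1n 4 (hfun f) x| < M) ->
  forall beta ell : R, 0 < beta -> 0 < ell ->
    ell ^+ 2 * (Vfun f mu beta / 2 - Ifun f beta + Rfun f mu beta / (4 * beta))
    = - ell ^+ 2 * Varb f beta (fun x => hfun f x - kfun f mu x / 2).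
Proof.
move=> f_gt0 f_C4 f_unimodal fE alpha_gt0 H_rv _ h4_bounded beta ell beta_gt0 _.
have dh := derivable_upto_ln f_gt0 f_C4.1.
have h''_poly_bounded : poly_bounded (derive1n 2 (hfun f)).
  apply: (poly_bounded_primitive (derivable_is_derive (dh 2%N isT))).
  apply: (poly_bounded_primitive (derivable_is_derive (dh 3%N isT))).
  by exists M, 0%N => x; rewrite expr0 mulr1; exact/ltW/h4_bounded.
have decay := unimodal_powR_decay f_gt0 f_unimodal fE alpha_gt0 H_rv beta_gt0.
rewrite (variance_identity f_gt0 (dh 0%N isT) decay mu (dh 1%N isT) (dh 2%N isT)
  h''_poly_bounded (lt0r_neq0 beta_gt0)).
by rewrite mulrN mulNr.
Qed.
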